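(* Let $\mathcal{G}$ be a strongly connected digraph with $N$ nodes and consider the distributed quantized weight-balancing algorithm described in the context, with step-size $\gamma(k)=2^{-n}$ for $2^n-1\le k\le 2^{n+1}-2$. If $\Vert\boldsymbol{\epsilon}(k)\Vert_1\ge 2N(N-1)\gamma(k)$, then $\Vert\boldsymbol{\epsilon}(k+N^{2N})\Vert_1\le\Vert\boldsymbol{\epsilon}(k)\Vert_1-2\gamma(k+N^{2N})$.
   Context: $\mathcal{G}=(\mathcal{V},\mathcal{E})$, $\mathcal{V}=\{1,\dots,N\}$, no self-loops; $\mathcal{N}_i^-=\{j:(j,i)\in\mathcal{E}\}$, $\mathcal{N}_i^+=\{j:(i,j)\in\mathcal{E}\}$, $d_i^+=|\mathcal{N}_i^+|$. Algorithm: $a_{ij}(0)=1$ if $j\in\mathcal{N}_i^-$ and $0$ otherwise; $b_i(k)=\sum_{j\in\mathcal{N}_i^-}a_{ij}(k)-\sum_{j\in\mathcal{N}_i^+}a_{ji}(k)$; $n_i(k)=1$ if $b_i(k)\ge d_i^+\gamma(k)$, else $0$; $a_{ij}(k+1)=a_{ij}(k)+n_j(k)\gamma(k)$ for $j\in\mathcal{N}_i^-$. $\boldsymbol{\epsilon}(k)=(|b_i(k)|)_{i=1}^N$. *)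

From mathcomp Require Import all_boot all_order all_algebra.
Set Implicit Arguments. Unset Strict Implicit. Unset Printing Implicit Defensive.
Import Order.TTheory GRing.Theory Num.Theory.
Local Open Scope ring_scope.

Section QWB.
Variables (R : realFieldType) (N : nat) (E : rel 'I_N).
(* E j i  <->  (j,i) is an edge, i.e. j \in N_i^-  (and i \in N_j^+). *)

(* gamma(k) = 2^{-n} for 2^n - 1 <= k <= 2^(n+1) - 2, i.e. n = floor(log2(k+1)) *)
Definition gamma (k : nat) : R := (2%:R)^-1 ^+ (trunc_log 2 k.+1).

Definition outdeg (i : 'I_N) : nat := #|[pred j | E i j]|.

Definition balance (a : 'I_N -> 'I_N -> R) (i : 'I_N) : R :=
  \sum_(j | E j i) a i j - \sum_(j | E i j) a j i.

Definition nflag (a : 'I_N -> 'I_N -> R) (k : nat) (i : 'I_N) : bool :=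
  (outdeg i)%:R * gamma k <= balance a i.

Fixpoint wts (k : nat) : 'I_N -> 'I_N -> R :=
  match k with
  | 0 => fun i j => if E j i then 1 else 0
  | k'.+1 => fun i j =>
      if E j i then wts k' i j + (if nflag (wts k') k' j then gamma k' else 0)
      else wts k' i j
  end.

Definition b (k : nat) (i : 'I_N) : R := balance (wts k) i.

Definition eps1 (k : nat) : R := \sum_i `|b k i|.

End QWB.

(* Let the excess be P(t) = sum_i max(b_i(t), 0); since sum_i b_i(t) = 0, we have
   ||eps(t)||_1 = 2 P(t).  P never increases, and since every b_i(t) is an integer multiple
   of gamma(t), P drops by at least gamma(t) whenever a node with negative balance receives
   weight from a firing in-neighbour.  Suppose this never happens during N^(2N) steps from k.
   Then negative balances are frozen, non-negative ones stay non-negative, P stays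
   >= N(N-1) gamma(k), and this forces some node to fire at every step.  Between two of its
   own firings, a non-negative node y is fed by at most 2(N-1) firings of its in-neighbours,
   so the firing counts satisfy F_x + 1 <= N^2 (F_y + 1) along every edge x -> y, and
   in-neighbours of a negative node never fire.  Following shortest paths to a negative node
   gives F_x + 1 <= N^(2(N-1)) for every x, hence fewer than N^(2N-1) firings in total:
   a contradiction. *)

From mathcomp Require Import all_boot all_order all_algebra.
From mathcomp Require Import zify ring lra.
Set Implicit Arguments. Unset Strict Implicit. Unset Printing Implicit Defensive.
Import Order.TTheory GRing.Theory Num.Theory.
Local Open Scope ring_scope.

Lemma sum_marked_blocks (f : nat -> nat) (g : pred nat) (C D : nat) s e :
  (forall t, (f t <= D)%N) ->
  (forall a c, (s <= a)%N -> (c <= e)%N ->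
     (forall t, (a <= t < c)%N -> ~~ g t) -> (\sum_(a <= t < c) f t <= C)%N) ->
  (\sum_(s <= t < e) f t <=
     C * (\sum_(s <= t < e) g t).+1 + D * \sum_(s <= t < e) g t)%N.
Proof.
move=> fD; have [n] := ubnP (e - s); elim: n s e => // n IH s e lt_es blockC.
have [/hasP[m] | /hasPn unmarked] := boolP (has g (index_iota s e)); last first.
  apply: leq_trans (blockC s e _ _ _) _ => // [t t_in|]; last by nia.
  by apply: unmarked; rewrite mem_index_iota.
rewrite mem_index_iota => /andP[sm me] gm.
have split_at F : (\sum_(s <= t < e) F t =
    \sum_(s <= t < m) F t + (F m + \sum_(m.+1 <= t < e) F t))%N.
  by rewrite (big_cat_nat sm (ltnW me)) /= (big_ltn me).
rewrite !split_at gm.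
have left := IH s m ltac:(lia) (fun a c sa cm => blockC a c sa (leq_trans cm (ltnW me))).
have right := IH m.+1 e ltac:(lia) (fun a c ma ce => blockC a c (leq_trans sm (ltnW ma)) ce).
have := fD m; nia.
Qed.

Section Grid.
Variable R : numDomainType.

Definition on_grid (g x : R) := exists z : int, x = z%:~R * g.

Lemma on_grid0 (g : R) : on_grid g 0.
Proof. by exists 0; rewrite mul0r. Qed.

Lemma on_grid_id (g : R) : on_grid g g.
Proof. by exists 1; rewrite mul1r. Qed.

Lemma on_gridD (g x y : R) : on_grid g x -> on_grid g y -> on_grid g (x + y).
Proof. by move=> [u ->] [v ->]; exists (u + v); rewrite intrD mulrDl. Qed.

Lemma on_gridB (g x y : R) : on_grid g x -> on_grid g y -> on_grid g (x - y).
Proof. by move=> [u ->] [v ->]; exists (u - v); rewrite intrB mulrBl. Qed.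

Lemma on_grid_sum (I : finType) (P : pred I) (g : R) (F : I -> R) :
  (forall i, P i -> on_grid g (F i)) -> on_grid g (\sum_(i | P i) F i).
Proof.
move=> onF; elim/big_rec: _ => [|i x Pi]; first exact: on_grid0.
exact/on_gridD/onF.
Qed.

Lemma on_grid_refine (g x : R) (m : nat) : on_grid (2%:R ^+ m * g) x -> on_grid g x.
Proof. by move=> [z ->]; exists (z * (2 ^ m)%:Z); rewrite intrM -mulrA -natrX. Qed.

Lemma on_grid_lt0 (g x : R) : 0 < g -> on_grid g x -> x < 0 -> x <= - g.
Proof.
move=> g_gt0 [z ->]; rewrite pmulr_llt0 // ltrz0 => z_lt0.
rewrite -mulN1r; apply: (ler_wpM2r (ltW g_gt0)).
by rewrite -(intrN R 1) ler_int; lia.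
Qed.

End Grid.

Section Dynamics.
Variables (R : realFieldType) (N : nat) (E : rel 'I_N).

Local Notation gam := (gamma R).
Local Notation w := (wts R E).
Local Notation bal := (b R E).
Local Notation fires t i := (nflag E (wts R E t) t i).
Local Notation d := (outdeg E).

Lemma gamma_gt0 t : 0 < gam t.
Proof. by rewrite exprn_gt0 // invr_gt0 ltr0n. Qed.

Lemma gamma_ratio s t : (s <= t)%N ->
  gam s = 2%:R ^+ (trunc_log 2 t.+1 - trunc_log 2 s.+1) * gam t.
Proof.
move=> le_st; have le_log := leq_trunc_log 2 (le_st : s.+1 <= t.+1)%N.
rewrite /gamma -{2}(subnK le_log) exprD mulrA -exprMn mulfV ?pnatr_eq0 //.
by rewrite expr1n mul1r.
Qed.

Lemma gamma_antimono s t : (s <= t)%N -> gam t <= gam s.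
Proof.
move=> /gamma_ratio ->; apply: ler_peMl; first exact/ltW/gamma_gt0.
by rewrite exprn_ege1 // ler1n.
Qed.

Lemma on_grid_gamma s t x : (s <= t)%N -> on_grid (gam s) x -> on_grid (gam t) x.
Proof. by move=> /gamma_ratio ->; apply: on_grid_refine. Qed.

Lemma wts_on_grid t i j : on_grid (gam t) (w t i j).
Proof.
elim: t i j => [|t IH] i j /=.
  rewrite /gamma trunc_log1 expr0.
  by case: (E j i); [apply: on_grid_id | apply: on_grid0].
apply: (@on_grid_gamma t) => //; case: (E j i) => //.
by apply: on_gridD => //; case: (fires t j); [apply: on_grid_id | apply: on_grid0].
Qed.

Lemma b_on_grid t i : on_grid (gam t) (bal t i).
Proof. by apply: on_gridB; apply: on_grid_sum => j _; apply: wts_on_grid. Qed.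

Lemma sum_b t : \sum_i bal t i = 0.
Proof. by rewrite /b /balance sumrB (exchange_big_dep xpredT) //= subrr. Qed.

Definition received t i : nat := \sum_(j | E j i) fires t j.

Lemma bS t i :
  bal t.+1 i = bal t i - (fires t i * d i)%:R * gam t + (received t i)%:R * gam t.
Proof.
rewrite /b /balance /=.
rewrite (eq_bigr (fun j => w t i j + (if fires t j then gam t else 0))) => [|j -> //].
rewrite (eq_bigr (fun j => w t j i + (if fires t i then gam t else 0))
  (P := fun j => E i j)) => [|j -> //].
rewrite !big_split /= sumr_const.
have -> : \sum_(j | E j i) (if fires t j then gam t else 0) = (received t i)%:R * gam t.
  rewrite natr_sum mulr_suml; apply: eq_bigr => j _.
  by case: (fires t j); rewrite ?mul1r ?mul0r.
have -> : #|[pred j | E i j]| = d i by apply: eq_card.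
rewrite natrM mulrnAl -mulr_natr.
by case: (fires t i); rewrite ?mul1r ?mul0r ?mulr0 ?subr0; ring.
Qed.

Lemma sum_received t : (\sum_i received t i = \sum_i fires t i * d i)%N.
Proof.
rewrite /received (exchange_big_dep xpredT) //=; apply: eq_bigr => j _.
by rewrite sum_nat_const mulnC.
Qed.

Definition excess t := \sum_i Num.max (bal t i) 0.

Lemma eps1_excess t : eps1 R E t = 2%:R * excess t.
Proof.
rewrite /eps1 (eq_bigr (fun i => 2%:R * Num.max (bal t i) 0 - bal t i)) => [|i _].
  by rewrite sumrB sum_b subr0 -mulr_sumr.
case: (lerP 0 (bal t i)) => /= [b_ge0|b_lt0].
  by rewrite (ger0_norm b_ge0); lra.
by rewrite (ltr0_norm b_lt0); lra.
Qed.

Lemma excess_deficit t : excess t = \sum_i Num.max (- bal t i) 0.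
Proof.
rewrite /excess (eq_bigr (fun i => Num.max (- bal t i) 0 + bal t i)) => [|i _].
  by rewrite big_split /= sum_b addr0.
case: (lerP 0 (bal t i)) => /= [b_ge0|b_lt0].
  by rewrite max_r ?oppr_le0 // add0r.
by rewrite max_l ?oppr_ge0 ?ltW // addNr.
Qed.

Lemma fires_ge0 t i : fires t i -> 0 <= bal t i.
Proof. by apply: le_trans; rewrite mulr_ge0 ?ler0n ?ltW ?gamma_gt0. Qed.

Lemma received_gamma_ge0 t i : 0 <= (received t i)%:R * gam t.
Proof. by rewrite mulr_ge0 ?ler0n ?ltW ?gamma_gt0. Qed.

Lemma b_ge0S t i : 0 <= bal t i -> 0 <= bal t.+1 i.
Proof.
have := received_gamma_ge0 t i; rewrite bS; case: (boolP (fires t i)) => [fi|_] r_ge0 b_ge0.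
  by rewrite mul1n; have : (d i)%:R * gam t <= bal t i by []; lra.
by rewrite mul0n mul0r subr0; lra.
Qed.

Lemma excess_gt0_b_lt0 t : 0 < excess t -> exists z, bal t z < 0.
Proof.
case: (pickP (fun z => bal t z < 0)) => [z b_lt0 _ | all_ge0]; first by exists z.
suff -> : excess t = 0 by rewrite ltxx.
rewrite /excess -[RHS](sum_b t); apply: eq_bigr => i _.
by rewrite max_l // leNgt all_ge0.
Qed.

Definition absorbs t i := (bal t i < 0) && (0 < received t i)%N.

Lemma absorbs_lt0 t i : absorbs t i -> bal t i < 0.
Proof. by case/andP. Qed.

Lemma lt0_nfires t i : bal t i < 0 -> fires t i = false.
Proof. by apply: contraTF => /fires_ge0; rewrite leNgt. Qed.

Lemma max_bS t i : Num.max (bal t.+1 i) 0 <= Num.max (bal t i) 0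
  - (fires t i * d i)%:R * gam t + (received t i)%:R * gam t - (absorbs t i)%:R * gam t.
Proof.
have g_gt0 := gamma_gt0 t; have r_ge0 := received_gamma_ge0 t i.
have [b_lt0|b_ge0] := ltrP (bal t i) 0; last first.
  have -> : absorbs t i = false by apply: contraTF b_ge0 => /absorbs_lt0; rewrite ltNge.
  by rewrite (max_l (b_ge0S b_ge0)) bS /= mul0r subr0.
rewrite bS lt0_nfires // mul0n mul0r !subr0 add0r /absorbs b_lt0 /=.
have [-> | r_gt0] := posnP (received t i); first by rewrite /= max_r; lra.
(* b_i(t) <= -gamma(t), so at least gamma(t) of the received weight fills the deficit. *)
have b_le := on_grid_lt0 g_gt0 (b_on_grid t i) b_lt0.
have r_ge1 : 1 <= (received t i)%:R :> R by rewrite ler1n.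
rewrite mul1r ge_max; apply/andP; split; nra.
Qed.

Lemma excess_step t : excess t.+1 <= excess t - \sum_i (absorbs t i)%:R * gam t.
Proof.
apply: le_trans (ler_sum _ (fun i _ => max_bS t i)) _.
have flows : \sum_i (fires t i * d i)%:R * gam t = \sum_i (received t i)%:R * gam t :> R.
  by rewrite -!mulr_suml -!natr_sum sum_received.
by rewrite !sumrB big_split /= sumrB flows -/(excess t); lra.
Qed.

Lemma excess_nonincr s t : (s <= t)%N -> excess t <= excess s.
Proof.
move=> /subnK <-; elim: (t - s)%N => // n IH; apply: le_trans IH.
apply: le_trans (excess_step _) _; rewrite gerBl.
by apply: sumr_ge0 => i _; rewrite mulr_ge0 ?ler0n ?ltW ?gamma_gt0.
Qed.

Lemma excess_absorbS t i : absorbs t i -> excess t.+1 <= excess t - gam t.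
Proof.
move=> absorbs_ti; apply: le_trans (excess_step t) _.
rewrite lerB // (bigD1 i) //= absorbs_ti mul1r lerDl.
by apply: sumr_ge0 => j _; rewrite mulr_ge0 ?ler0n ?ltW ?gamma_gt0.
Qed.

Lemma b_ge0_mono s t i : (s <= t)%N -> 0 <= bal s i -> 0 <= bal t i.
Proof. by move=> /subnK <-; elim: (t - s)%N => // n IH /IH /b_ge0S. Qed.

Lemma b_lt0S t i : bal t i < 0 -> ~~ absorbs t i -> bal t.+1 i = bal t i.
Proof.
move=> b_lt0; rewrite /absorbs b_lt0 -leqNgt leqn0 => /eqP r0.
by rewrite bS lt0_nfires // r0 !mul0r subr0 addr0.
Qed.

Lemma fires_le_received t x y : E x y -> (fires t x <= received t y)%N.
Proof. by move=> Exy; rewrite /received (bigD1 x) //= leq_addr. Qed.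

Lemma card_notin_le (P : pred 'I_N) i : ~~ P i -> (#|P| <= N.-1)%N.
Proof.
move=> nPi; rewrite -[N in N.-1]card_ord -(cardC1 i); apply/subset_leq_card/subsetP => j Pj.
by rewrite inE; apply: contraNneq nPi => <-.
Qed.

Hypothesis E_irr : irreflexive E.

Lemma outdeg_le i : (d i <= N.-1)%N.
Proof. by apply: (@card_notin_le _ i); rewrite /= E_irr. Qed.

Lemma received_le t i : (received t i <= N.-1)%N.
Proof.
apply: (@leq_trans (\sum_(j | E j i) 1)); first by apply: leq_sum => j _; case: (fires t j).
by rewrite sum1_card (@card_notin_le _ i) // /= E_irr.
Qed.

Lemma quiet_b_acc y a c : (a <= c)%N -> (forall t, (a <= t < c)%N -> ~~ fires t y) ->
  bal a y + (\sum_(a <= t < c) received t y)%:R * gam c <= bal c y.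
Proof.
move=> /subnK <-; elim: (c - a)%N => [|n IH] quiet_y.
  by rewrite add0n big_geq // mul0r addr0.
have quiet_n t : (a <= t < n + a)%N -> ~~ fires t y.
  by move=> /andP[a_le lt_t]; rewrite quiet_y // a_le ltnW.
have nfires_n : ~~ fires (n + a) y by rewrite quiet_y // leq_addl addSn ltnSn.
rewrite addSn big_nat_recr ?leq_addl //= bS (negbTE nfires_n) mul0n mul0r subr0.
have gam_le := gamma_antimono (leqnSn (n + a)).
have scale_le (m : nat) : m%:R * gam (n + a).+1 <= m%:R * gam (n + a).
  by apply: ler_wpM2l gam_le; apply: ler0n.
rewrite natrD mulrDl addrA; apply: lerD => //.
by apply: le_trans _ (IH quiet_n); rewrite lerD2l.
Qed.

Lemma quiet_received_lt y a c : 0 <= bal a y -> (a <= c)%N ->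
  (forall t, (a <= t <= c)%N -> ~~ fires t y) -> (\sum_(a <= t < c) received t y < d y)%N.
Proof.
move=> b_ge0 ac quiet_y.
have quiet_lt t : (a <= t < c)%N -> ~~ fires t y.
  by move=> /andP[a_le lt_t]; rewrite quiet_y // a_le ltnW.
have := quiet_b_acc ac quiet_lt.
have : bal c y < (d y)%:R * gam c by rewrite ltNge; apply: quiet_y; rewrite ac leqnn.
rewrite -(ltr_nat R) -(ltr_pM2r (gamma_gt0 c)); lra.
Qed.

Lemma quiet_received_le y a c : 0 <= bal a y ->
  (forall t, (a <= t < c)%N -> ~~ fires t y) -> (\sum_(a <= t < c) received t y <= 2 * N.-1)%N.
Proof.
move=> b_ge0 quiet_y; have [ca|] := leqP c a; first by rewrite big_geq.
case: c quiet_y => // c quiet_y; rewrite ltnS => ac.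
rewrite big_nat_recr //=.
have := quiet_received_lt b_ge0 ac quiet_y; have := outdeg_le y; have := received_le c y.
lia.
Qed.

Lemma received_le_firings y s e : 0 <= bal s y ->
  (\sum_(s <= t < e) received t y <=
     2 * N.-1 * (\sum_(s <= t < e) fires t y).+1 + N.-1 * \sum_(s <= t < e) fires t y)%N.
Proof.
move=> b_ge0; apply: sum_marked_blocks => [t|a c sa _]; first exact: received_le.
exact/quiet_received_le/(b_ge0_mono sa).
Qed.

Section QuietWindow.
Variables (k L : nat).
Hypothesis quiet : forall t i, (k <= t < k + L)%N -> ~~ absorbs t i.

Lemma quiet_b_lt0 i t : bal k i < 0 -> (k <= t <= k + L)%N -> bal t i = bal k i.
Proof.
move=> b_lt0 /andP[/subnK <-]; elim: (t - k)%N => // n IH lt_nL.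
have IHn := IH (ltnW lt_nL).
by rewrite addSn b_lt0S ?IHn // quiet // leq_addl -addSn.
Qed.

Lemma quiet_excess t : (k <= t <= k + L)%N -> excess t = excess k.
Proof.
move=> /andP[kt tL]; rewrite !excess_deficit; apply: eq_bigr => i _.
have [b_lt0|b_ge0] := ltrP (bal k i) 0; first by rewrite quiet_b_lt0 ?kt.
by rewrite !max_r // oppr_le0 // (b_ge0_mono kt).
Qed.

Definition firings i := (\sum_(k <= t < k + L) fires t i)%N.

Lemma lt0_firings i : bal k i < 0 -> firings i = 0%N.
Proof.
move=> b_lt0; rewrite /firings big_nat_cond big1 // => t /andP[/andP[kt tL] _].
by rewrite lt0_nfires // quiet_b_lt0 // kt ltnW.
Qed.

Lemma firings_edge x y : E x y -> (firings x + 1 <= N * N * (firings y + 1))%N.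
Proof.
move=> Exy; have N_gt0 : (0 < N)%N := leq_ltn_trans (leq0n x) (ltn_ord x).
have [b_lt0|b_ge0] := ltrP (bal k y) 0.
  (* y keeps its negative balance and is never fed, so x never fires. *)
  have -> : firings x = 0%N.
    rewrite /firings big_nat_cond big1 // => t /andP[/andP[kt tL] _]; apply/eqP.
    have := fires_le_received t Exy; have := quiet y (introT andP (conj kt tL)).
    by rewrite /absorbs quiet_b_lt0 ?kt ?(ltnW tL) // b_lt0 /= -leqNgt; lia.
  by nia.
have x_le_y : (firings x <= \sum_(k <= t < k + L) received t y)%N.
  by apply: leq_sum => t _; apply: fires_le_received.
have := received_le_firings (k + L) b_ge0; rewrite -/(firings y).
nia.
Qed.

Lemma firings_path x p : path E x p ->
  (firings x + 1 <= (N * N) ^ size p * (firings (last x p) + 1))%N.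
Proof.
elim: p x => [|y p IH] x /=; first by rewrite mul1n.
move=> /andP[Exy /IH path_y]; apply: leq_trans (firings_edge Exy) _.
by rewrite expnS -[in X in (_ <= X)%N]mulnA leq_mul2l path_y orbT.
Qed.

Hypothesis E_connected : forall i j, connect E i j.

Lemma firings_bound x z : bal k z < 0 -> (firings x + 1 <= (N * N) ^ N.-1)%N.
Proof.
have /connectP[p path_p ->] := E_connected x z.
case: (shortenP path_p) => p' path_p' uniq_p' _ b_lt0.
have size_p' : (size p' <= N.-1)%N.
  by have := max_card (mem (x :: p')); rewrite card_ord (card_uniqP uniq_p') /=; lia.
apply: leq_trans (firings_path path_p') _; rewrite lt0_firings // muln1.
by apply: leq_pexp2l size_p'; rewrite muln_gt0 andbb; apply: leq_ltn_trans (ltn_ord x).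
Qed.

Hypothesis N_ge2 : (2 <= N)%N.
Hypothesis excess_large : (N * N.-1)%:R * gam k <= excess k.

Lemma fires_each_step t : (k <= t < k + L)%N -> exists i, fires t i.
Proof.
move=> /andP[kt tL]; have [/existsP // | /existsPn silent] := boolP [exists i, fires t i].
exfalso.
have dgam_gt0 : 0 < (N.-1)%:R * gam t by rewrite mulr_gt0 ?gamma_gt0 // ltr0n; lia.
have : excess t < \sum_(i < N) (N.-1)%:R * gam t.
  apply: ltr_sum => [|i _]; first by apply/hasP; exists (Ordinal (ltnW N_ge2)).
  rewrite gt_max dgam_gt0 andbT; apply: lt_le_trans (_ : _ < (d i)%:R * gam t) _.
    by rewrite ltNge; apply: silent.
  by apply: ler_wpM2r; [exact/ltW/gamma_gt0 | rewrite ler_nat outdeg_le].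
have -> : \sum_(i < N) (N.-1)%:R * gam t = (N * N.-1)%:R * gam t.
  by rewrite sumr_const card_ord natrM; ring.
rewrite quiet_excess ?kt ?(ltnW tL) //.
rewrite ltNge => /negP; apply; apply: le_trans _ excess_large.
by apply: ler_wpM2l (gamma_antimono kt); apply: ler0n.
Qed.

Lemma window_le_firings : (L <= \sum_i firings i)%N.
Proof.
rewrite /firings exchange_big /=.
apply: (@leq_trans (\sum_(k <= t < k + L) 1)); first by rewrite sum_nat_const_nat addKn muln1.
rewrite big_nat_cond [X in (_ <= X)%N]big_nat_cond; apply: leq_sum => t /andP[t_in _].
by have [i fi] := fires_each_step t_in; rewrite (bigD1 i) //= fi.
Qed.

Lemma quiet_window_short : (L < N ^ (2 * N))%N.
Proof.
have [z b_lt0] : exists z, bal k z < 0.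
  apply: excess_gt0_b_lt0; apply: lt_le_trans excess_large.
  by rewrite mulr_gt0 ?gamma_gt0 // ltr0n muln_gt0; lia.
have bound : (\sum_i (firings i + 1) <= \sum_(i < N) (N * N) ^ N.-1)%N.
  by apply: leq_sum => i _; apply: firings_bound b_lt0.
rewrite big_split /= !sum_nat_const card_ord muln1 expnMn -expnD -expnS in bound.
have pow_le : (N ^ (N.-1 + N.-1).+1 <= N ^ (2 * N))%N by apply: leq_pexp2l; lia.
apply: leq_ltn_trans window_le_firings (leq_trans _ pow_le).
by apply: leq_trans bound; rewrite -addn1 leq_add2l; lia.
Qed.

End QuietWindow.

Lemma excess_drop s t e i : (s <= t < e)%N -> absorbs t i -> excess e <= excess s - gam e.
Proof.
move=> /andP[st te] /excess_absorbS absorb_drop.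
have := excess_nonincr st; have := excess_nonincr te; have := gamma_antimono (ltnW te); lra.
Qed.

Lemma absorbs_within k : (2 <= N)%N -> (forall i j, connect E i j) ->
  (N * N.-1)%:R * gam k <= excess k ->
  exists2 t, (k <= t < k + N ^ (2 * N))%N & exists i, absorbs t i.
Proof.
move=> N_ge2 E_connected excess_large.
pose some_absorbs := [pred t | [exists i, absorbs t i]].
have [/hasP[t] | /hasPn quiet] := boolP (has some_absorbs (index_iota k (k + N ^ (2 * N)))).
  by rewrite mem_index_iota => t_in /existsP; exists t.
suff : (N ^ (2 * N) < N ^ (2 * N))%N by rewrite ltnn.
apply: quiet_window_short E_connected N_ge2 excess_large => t i t_in.
by move: (quiet t); rewrite mem_index_iota t_in negb_exists => /(_ isT) /forallP.
Qed.

End Dynamics.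

Theorem proposition2 (R : realFieldType) (N : nat) (E : rel 'I_N) :
  (2 <= N)%N ->
  irreflexive E ->
  (forall i j : 'I_N, connect E i j) ->
  forall k : nat,
    (2 * N * (N - 1))%N%:R * gamma R k <= eps1 R E k ->
    eps1 R E (k + N ^ (2 * N)) <= eps1 R E k - 2%:R * gamma R (k + N ^ (2 * N)).
Proof.
move=> N_ge2 E_irr E_connected k.
rewrite !eps1_excess -mulnA natrM -mulrA subn1 ler_pM2l ?ltr0n // => excess_large.
have [t t_in [i absorbs_ti]] := absorbs_within E_irr N_ge2 E_connected excess_large.
have := excess_drop t_in absorbs_ti; lra.
Qed.
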